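(* Assume $\delta\in\mathcal P$, and let $\hat v(t,c,y)=\frac{c^{1-\delta}}{1-\delta}e^{\frac{\hat f(t)}2y^2+\hat g(t)y+\hat h(t)}$ and $\hat V(t,c,\gamma)=\frac{c^{1-\delta}}{1-\delta}e^{\frac{\bar f(t)}2\gamma^2+\bar g(t)\gamma+\bar h(t)}$ be the full- and partial-information value functions. Define the loss of utility $L_t=\mathbb E[\hat v(t,c,Y_t)-\hat V(t,c,\Gamma_t)\mid\mathcal F_t]$ for $c>0$, and the efficiency $\zeta>0$ as the solution of $\mathbb E[\hat v(0,\zeta,Y_0)-\hat V(0,1,\Gamma_0)\mid\mathcal F_0]=0$. Then, with $u(s)=\tilde\Sigma_Y\tilde\Sigma_S^\top\hat f(s)+\mathbf a^\top$ and $K_t=\int_t^T\frac{P(s)}{1-P(s)\hat f(s)}u(s)\hat\Theta^{-1}u(s)^\top ds$, $$L_t=\frac{c^{1-\delta}}{1-\delta}\Big(e^{\frac{1-\delta}2K_t}-1\Big)e^{\frac{\bar f(t)}2\Gamma_t^2+\bar g(t)\Gamma_t+\bar h(t)},\qquad \zeta=\exp\{-\tfrac12K_0\}.$$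
   Context: Model: $T>0$; filtered space with complete right-continuous $\mathbb G$ supporting independent Brownian motions $Z^S\in\mathbb R^n$, $Z^Y\in\mathbb R$. Parameters $r>0$, $\mathbf r_n=r\mathbf1_n$, $\mathbf a,\mathbf b\in\mathbb R^n$, $\lambda,\beta\in\mathbb R$, $\sigma_Y>0$, $\Sigma_S=\mathrm{diag}(\sigma_i)$, $\sigma_i>0$; positive definite correlation matrix $R=LL^\top$ (Cholesky), $L_S=(l_{ij})_{i,j\le n}$, $L_Y=(l_{n+1,j})_{j\le n}$, $\tilde\Sigma_S=\Sigma_SL_S$, $\tilde\Sigma_Y=\sigma_YL_Y$, $\tilde\sigma_Y=\sigma_Yl_{n+1,n+1}$. $dY_t=(\lambda Y_t+\beta)dt+\tilde\Sigma_YdZ^S_t+\tilde\sigma_YdZ^Y_t$, $Y_0\sim N(\Gamma_0,P_0)$; $dS_t=\mathrm{diag}(S_t)[(\mathbf aY_t+\mathbf b)dt+\tilde\Sigma_SdZ^S_t]$. Green/brown split at $k$; $\varepsilon\ge0$, $\mathbf e=(0_k,\varepsilon\mathbf1_{n-k})$, $D_{\mathbf e}=\mathrm{diag}(e_i\sigma_i^2)$; $\delta\in(0,1)\cup(1,\infty)$, $\hat\Theta=D_{\mathbf e}+\delta\tilde\Sigma_S\tilde\Sigma_S^\top$. $\mathbb F$ = augmented natural filtration of $S$; $\Gamma_t=\mathbb E[Y_t|\mathcal F_t]$; conditionally on $\mathcal F_t$, $Y_t\sim N(\Gamma_t,P(t))$ with $P$ deterministic solving $P'=2\lambda P+\sigma_Y^2-\bar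 P(\tilde\Sigma_S\tilde\Sigma_S^\top)^{-1}\bar P^\top$, $P(0)=P_0$, $\bar P(t)=\tilde\Sigma_Y\tilde\Sigma_S^\top+P(t)\mathbf a^\top$. Full-information system (zero terminal values, unique $\mathcal C^1_b$ solution for $\delta\in\mathcal P$): $\hat f'+[(1-\delta)\tilde\Sigma_Y\tilde\Sigma_S^\top\hat\Theta^{-1}\tilde\Sigma_S\tilde\Sigma_Y^\top+\sigma_Y^2]\hat f^2+2[(1-\delta)\tilde\Sigma_Y\tilde\Sigma_S^\top\hat\Theta^{-1}\mathbf a+\lambda]\hat f+(1-\delta)\mathbf a^\top\hat\Theta^{-1}\mathbf a=0$; $\hat g'+[(1-\delta)\tilde\Sigma_Y\tilde\Sigma_S^\top\hat\Theta^{-1}\mathbf a+\lambda]\hat g+[(1-\delta)\tilde\Sigma_Y\tilde\Sigma_S^\top\hat\Theta^{-1}(\mathbf b-\mathbf r_n)+\beta]\hat f+[(1-\delta)\tilde\Sigma_Y\tilde\Sigma_S^\top\hat\Theta^{-1}\tilde\Sigma_S\tilde\Sigma_Y^\top+\sigma_Y^2]\hat f\hat g+(1-\delta)\mathbf a^\top\hat\Theta^{-1}(\mathbf b-\mathbf r_n)=0$; $\hat h'+(1-\delta)r+[(1-\delta)\tilde\Sigma_Y\tilde\Sigma_S^\top\hat\Theta^{-1}(\mathbf b-\mathbf r_n)+\beta]\hat g+\frac{\sigma_Y^2}2\hat f+\frac12[(1-\delta)\tilde\Sigma_Y\tilde\Sigma_S^\top\hat\Theta^{-1}\tilde\Sigma_S\tilde\Sigma_Y^\top+\sigma_Y^2]\hat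 g^2+\frac{1-\delta}2(\mathbf b-\mathbf r_n)^\top\hat\Theta^{-1}(\mathbf b-\mathbf r_n)=0$. Partial-information functions: $\bar f=\hat f/(1-P\hat f)$, $\bar g=\hat g/(1-P\hat f)$, $\bar h(t)=\hat h(t)-\frac12\log(1-P(t)\hat f(t))+\frac12\frac{\hat g(t)^2P(t)}{1-P(t)\hat f(t)}-\frac{1-\delta}2K_t$, where $1-P\hat f>0$ on $[0,T]$. $\mathcal P=\{\delta\in(0,1)\cup(1,\infty):\Delta(\delta)>0\}$, with $\hat\Theta(x)=D_{\mathbf e}+x\tilde\Sigma_S\tilde\Sigma_S^\top$ and $\Delta(x)=4\{[(1-x)\tilde\Sigma_Y\tilde\Sigma_S^\top\hat\Theta(x)^{-1}\mathbf a+\lambda]^2-[(1-x)^2\tilde\Sigma_Y\tilde\Sigma_S^\top\hat\Theta(x)^{-1}\tilde\Sigma_S\tilde\Sigma_Y^\top+(1-x)\sigma_Y^2]\mathbf a^\top\hat\Theta(x)^{-1}\mathbf a\}$. *)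

From HB Require Import structures.
From mathcomp Require Import all_boot all_order all_algebra.
From mathcomp Require Import all_classical all_reals all_analysis.
Set Implicit Arguments. Unset Strict Implicit. Unset Printing Implicit Defensive.
Import Order.TTheory GRing.Theory Num.Theory.
Import numFieldNormedType.Exports.
Local Open Scope classical_set_scope.
Local Open Scope ring_scope.

(* Model parameters of the paper.  The correlation matrix is R = Lc Lc^T
   (Cholesky factor Lc of size n+1). *)
Record params (R : realType) (n : nat) := Params {
  rr : R;                      (* interest rate r *)
  av : 'cV[R]_n;
  bv : 'cV[R]_n;
  lam : R;
  beta : R;
  sigY : R;
  sig : 'I_n -> R;
  Lc : 'M[R]_(n + 1);
  kk : nat;                    (* green/brown split index k *)
  eps : R;
  delta : R;
  TT : R;
  Gam0 : R;                    (* mean Gamma_0 of Y_0 *)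
  P0 : R                       (* variance P_0 of Y_0 *)
}.

Section Model.
Context {R : realType} {n : nat} (p : params R n).

Definition sc (M : 'M[R]_1) : R := M 0 0.

Definition LS : 'M[R]_n := ulsubmx (Lc p).
Definition LY : 'M[R]_(1, n) := dlsubmx (Lc p).
Definition SigS : 'M[R]_n := diag_mx (\row_i sig p i).
Definition SigSt : 'M[R]_n := SigS *m LS.
Definition SigYt : 'M[R]_(1, n) := sigY p *: LY.
Definition rn : 'cV[R]_n := const_mx (rr p).

Definition ev (i : 'I_n) : R := if (i < kk p)%N then 0 else eps p.
Definition De : 'M[R]_n := diag_mx (\row_i (ev i * sig p i ^+ 2)).

Definition Theta (x : R) : 'M[R]_n := De + x *: (SigSt *m SigSt^T).

Definition qYY x := sc (SigYt *m SigSt^T *m invmx (Theta x) *m SigSt *m SigYt^T).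
Definition qYa x := sc (SigYt *m SigSt^T *m invmx (Theta x) *m av p).
Definition qaa x := sc ((av p)^T *m invmx (Theta x) *m av p).
Definition qYb x := sc (SigYt *m SigSt^T *m invmx (Theta x) *m (bv p - rn)).
Definition qab x := sc ((av p)^T *m invmx (Theta x) *m (bv p - rn)).
Definition qbb x := sc ((bv p - rn)^T *m invmx (Theta x) *m (bv p - rn)).

Definition Delta (x : R) : R :=
  4 * (((1 - x) * qYa x + lam p) ^+ 2
       - ((1 - x) ^+ 2 * qYY x + (1 - x) * sigY p ^+ 2) * qaa x).

Definition in_calP (x : R) : Prop := (0 < x /\ x != 1) /\ 0 < Delta x.

Definition solves_on (T : R) (f F : R -> R) : Prop :=
  {within `[0, T], continuous f} /\
  forall t, 0 < t < T -> derivable f t 1 /\ derive1 f t = F t.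

Definition dl := delta p.

Definition fhat_rhs (fh : R -> R) t : R :=
  - (((1 - dl) * qYY dl + sigY p ^+ 2) * fh t ^+ 2
     + 2 * ((1 - dl) * qYa dl + lam p) * fh t + (1 - dl) * qaa dl).
Definition ghat_rhs (fh gh : R -> R) t : R :=
  - (((1 - dl) * qYa dl + lam p) * gh t
     + ((1 - dl) * qYb dl + beta p) * fh t
     + ((1 - dl) * qYY dl + sigY p ^+ 2) * fh t * gh t
     + (1 - dl) * qab dl).
Definition hhat_rhs (fh gh : R -> R) t : R :=
  - ((1 - dl) * rr p + ((1 - dl) * qYb dl + beta p) * gh t
     + sigY p ^+ 2 / 2 * fh t
     + 1 / 2 * ((1 - dl) * qYY dl + sigY p ^+ 2) * gh t ^+ 2
     + (1 - dl) / 2 * qbb dl).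

(* filter Riccati equation for the conditional variance P *)
Definition Pbar (P : R -> R) t : 'M[R]_(1, n) := SigYt *m SigSt^T + P t *: (av p)^T.
Definition P_rhs (P : R -> R) t : R :=
  2 * lam p * P t + sigY p ^+ 2
  - sc (Pbar P t *m invmx (SigSt *m SigSt^T) *m (Pbar P t)^T).

Definition uvec (fh : R -> R) s : 'M[R]_(1, n) := fh s *: (SigYt *m SigSt^T) + (av p)^T.
Definition Kt (fh P : R -> R) (t : R) : R :=
  Rintegral lebesgue_measure `[t, TT p]
    (fun s => P s / (1 - P s * fh s) * sc (uvec fh s *m invmx (Theta dl) *m (uvec fh s)^T)).

Definition fbar (fh P : R -> R) t := fh t / (1 - P t * fh t).
Definition gbar (fh gh P : R -> R) t := gh t / (1 - P t * fh t).
Definition hbar (fh gh hh P : R -> R) t :=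
  hh t - 1 / 2 * ln (1 - P t * fh t) + 1 / 2 * (gh t ^+ 2 * P t / (1 - P t * fh t))
  - (1 - dl) / 2 * Kt fh P t.

Definition vhat (fh gh hh : R -> R) t c y :=
  c `^ (1 - dl) / (1 - dl) * expR (fh t / 2 * y ^+ 2 + gh t * y + hh t).
Definition Vhat (fh gh hh P : R -> R) t c g :=
  c `^ (1 - dl) / (1 - dl)
  * expR (fbar fh P t / 2 * g ^+ 2 + gbar fh gh P t * g + hbar fh gh hh P t).

End Model.

Definition gauss_exp {R : realType} (m v : R) (F : R -> R) : R :=
  Rintegral lebesgue_measure setT (fun y => F y * normal_pdf m (Num.sqrt v) y).

From HB Require Import structures.
From mathcomp Require Import all_boot all_order all_algebra.
From mathcomp Require Import all_classical all_reals all_analysis.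
From mathcomp Require Import ring lra.
Import Order.TTheory GRing.Theory Num.Theory.
Import numFieldNormedType.Exports.
Local Open Scope classical_set_scope.
Local Open Scope ring_scope.

(* Conditionally on F_t, Y_t ~ N(Gamma_t, P(t)), so the conditional expectation
   of the full-information value function is the Gaussian integral of the
   exponential of a quadratic in Y_t.  Completing the square, which is legitimate
   because P(t) > 0 and 1 - P(t) fhat(t) > 0, produces the exponents fbar, gbar
   and hbar + (1 - delta) K_t / 2, since hbar carries the correction
   -(1 - delta) K_t / 2; this gives L_t.  Positivity of P holds because the
   filter Riccati equation has the value sigmaY_tilde^2 > 0 at P = 0.  Finally
   the efficiency equation reduces to zeta^(1 - delta) exp((1 - delta) K_0 / 2) = 1. *)

Set Implicit Arguments.
Unset Strict Implicit.
Unset Printing Implicit Defensive.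

Section ODEPositivity.
Variable R : realType.

Lemma continuous_within_itv_dist (a b t : R) (f : R -> R) e :
  {within `[a, b], continuous f} -> a <= t <= b -> 0 < e ->
  exists2 d, 0 < d &
    forall u, a <= u <= b -> `|u - t| < d -> `|f u - f t| < e.
Proof.
move=> cf tab e0.
have tin : `[a, b]%classic t by rewrite /= in_itv.
have /cvgrPdist_lt /(_ e e0) := (subspace_continuousP _ _).1 cf t tin.
rewrite near_withinE => /nbhs_ballP [d /= d0 Hd].
exists d => // u uT ut; rewrite distrC; apply: Hd; last by rewrite /= in_itv.
by rewrite /ball /= distrC.
Qed.

Lemma quadratic_pos_near0 (c0 c1 c2 : R) : 0 < c0 ->
  exists2 eta, 0 < eta &
    forall x, `|x| < eta -> 0 < c0 + x * c1 + x ^+ 2 * c2.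
Proof.
move=> c0_gt0; set K := `|c1| + `|c2| + 1.
have K_gt0 : 0 < K by rewrite /K; have := normr_ge0 c1; have := normr_ge0 c2; lra.
exists (Num.min 1 (c0 / (2 * K))); first by rewrite lt_min ltr01 divr_gt0 ?mulr_gt0.
move=> x; rewrite lt_min ltr_pdivlMr ?mulr_gt0 // => /andP[x_lt1 x_small].
have x1 := lerNnormlW (lexx `|x * c1|); rewrite normrM in x1.
have x2 := lerNnormlW (lexx `|x ^+ 2 * c2|); rewrite normrM normrX in x2.
have xx2 : `|x| ^+ 2 * `|c2| <= `|x| * `|c2|.
  by rewrite expr2 -mulrA ler_piMl ?mulr_ge0 // ltW.
move: x_small; rewrite /K; have := normr_ge0 x; have := normr_ge0 c1; nra.
Qed.

(* A solution of P' = G(P) cannot leave (0, +oo): at the first time P reaches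
   0 it would be small, so P' = G(P) > 0 just before, and P would increase. *)
Lemma autonomous_ode_pos (T eta : R) (P G : R -> R) :
  0 < eta -> (forall x, `|x| < eta -> 0 < G x) ->
  {within `[0, T], continuous P} ->
  (forall t, 0 < t < T -> derivable P t 1 /\ derive1 P t = G (P t)) ->
  0 < P 0 -> forall t, 0 <= t <= T -> 0 < P t.
Proof.
move=> eta_gt0 G_pos cP dP P0_gt0 t tT; rewrite ltNge; apply/negP => Pt_le0.
pose S := [set u | 0 <= u <= T /\ P u <= 0].
have St : S t by [].
have hS : has_inf S by split; [exists t | exists 0 => u [/andP[]]].
pose ts := inf S.
have inf_le u : S u -> ts <= u by exact: (ge_inf hS.2).
have ts_ge0 : 0 <= ts by apply: lb_le_inf; [exists t | move=> u [/andP[]]].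
have ts_in : 0 <= ts <= T by rewrite ts_ge0 (le_trans (inf_le t St)) //; case/andP: tT.
have [d d_gt0 near_ts] :=
  continuous_within_itv_dist cP ts_in (divr_gt0 eta_gt0 (ltr0Sn _ 1)).
have [e Se e_lt] := inf_adherent d_gt0 hS.
have ts_e := inf_le e Se; have [/andP[_ eT] Pe_le0] := Se.
have [s [s_ge0 s_ts ts_s Ps_gt0]] :
    exists s, [/\ 0 <= s, s <= ts, ts - s < d & 0 < P s].
  pose s := Num.max 0 (ts - d / 2); exists s.
  have s_ge : ts - d / 2 <= s by rewrite le_max lexx orbT.
  split; [by rewrite le_max lexx | by rewrite ge_max ts_ge0; lra | lra |].
  have [->//|s_neq0] := eqVneq s 0; rewrite ltNge; apply/negP => Ps_le0.
  have s_in : 0 <= s <= T.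
    by rewrite le_max lexx ge_max /=; case/andP: ts_in => *; apply/andP; split; lra.
  have := inf_le s (conj s_in Ps_le0).
  by move: s_neq0; rewrite /s maxEle; case: leP; rewrite ?eqxx //; lra.
have s_e : s < e.
  by rewrite lt_neqAle (le_trans s_ts ts_e) andbT; apply: contraTneq Ps_gt0 => ->; rewrite -leNgt.
have s_in : s <= s <= e by rewrite lexx ltW.
have e_in : s <= e <= e by rewrite lexx ltW.
have close u : s <= u <= e -> `|P u - P ts| < eta / 2.
  move=> /andP[su ue]; apply: near_ts; first by apply/andP; split; lra.
  by rewrite ltr_norml; apply/andP; split; lra.
have P_small u : s <= u <= e -> `|P u| < eta.
  by move=> su; move: (close u su) (close s s_in) (close e e_in); rewrite !ltr_norml; lra.
have in_open u : u \in `]s, e[ -> 0 < u < T by rewrite in_itv /= => /andP[] *; lra.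
have P_incr : {in `[s, e] &, {homo P : x y / x < y}}.
  apply: gtr0_derive1_lt_cc => [u /in_open /dP[] // | u uin |].
    rewrite (proj2 (dP u (in_open u uin))) G_pos // P_small //.
    by move: uin; rewrite in_itv /= => /andP[su ue]; rewrite !ltW.
  by apply: continuous_subspaceW cP => u; rewrite /= !in_itv /= => /andP[] *; lra.
by have := P_incr s e; rewrite !in_itv /= s_in e_in => /(_ isT isT s_e); lra.
Qed.

End ODEPositivity.

Section GaussianIntegral.
Variable R : realType.

Lemma expR_Nhalf_ln (q : R) : 0 < q -> expR (- (1 / 2 * ln q)) = (Num.sqrt q)^-1.
Proof.
move=> q_gt0; rewrite expRN; congr _^-1.
have sq : expR (1 / 2 * ln q) ^+ 2 = q.
  by rewrite -expRM_natl mulrA div1r mulfV ?pnatr_eq0 // mul1r lnK.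
by rewrite -[in RHS]sq sqrtr_sqr gtr0_norm ?expR_gt0.
Qed.

Lemma Rintegral_scaled_normal_pdf (K m s : R) :
  Rintegral lebesgue_measure setT (fun y => K * normal_pdf m s y) = K.
Proof.
rewrite RintegralZl //; last exact: integrable_normal_pdf.
by rewrite /Rintegral integral_normal_pdf /= mulr1.
Qed.

(* Completing the square: the integrand is a multiple of the density of
   N((m + v b) / q, v / q), q = 1 - v f. *)
Lemma gauss_exp_expR_quadratic (C m v f b h : R) : 0 < v -> 0 < 1 - v * f ->
  gauss_exp m v (fun y => C * expR (f / 2 * y ^+ 2 + b * y + h)) =
  C * expR (f / (1 - v * f) / 2 * m ^+ 2 + b / (1 - v * f) * m
            + (h - 1 / 2 * ln (1 - v * f) + 1 / 2 * (b ^+ 2 * v / (1 - v * f)))).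
Proof.
move=> v_gt0 q_gt0; set q := 1 - v * f; set K := RHS.
have vq_gt0 : 0 < v / q by rewrite divr_gt0.
rewrite -(Rintegral_scaled_normal_pdf K ((m + v * b) / q) (Num.sqrt (v / q))).
apply: eq_Rintegral => y _.
have pi_gt0 : 0 < pi :> R by exact: pi_gt0.
rewrite /normal_pdf !sqrtr_eq0 !leNgt v_gt0 vq_gt0 /= /normal_peak /normal_fun.
rewrite !sqr_sqrtr ?ltW // (_ : v / q * pi *+ 2 = (v * pi *+ 2) / q); last first.
  by rewrite !mulr2n; ring.
rewrite sqrtrM ?mulrn_wge0 ?mulr_ge0 ?ltW // sqrtrV ?ltW //.
set X := f / q / 2 * m ^+ 2 + b / q * m + 1 / 2 * (b ^+ 2 * v / q) + h.
have -> : K = C * expR X * (Num.sqrt q)^-1.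
  by rewrite /K -expR_Nhalf_ln // -[RHS]mulrA -expRD /X; congr (_ * expR _); ring.
have completed_square : expR (f / 2 * y ^+ 2 + b * y + h) =
    expR X * expR (- (y - (m + v * b) / q) ^+ 2 / (v / q *+ 2))
    / expR (- (y - m) ^+ 2 / (v *+ 2)).
  rewrite -expRN -!expRD; congr expR; rewrite /X !mulr2n /q; field.
  by rewrite !gt_eqF // addr_gt0.
have sq_neq0 : Num.sqrt q != 0 by rewrite sqrtr_eq0 -ltNge.
have sv_neq0 : Num.sqrt (v * pi *+ 2) != 0.
  by rewrite sqrtr_eq0 -ltNge mulrn_wgt0 ?mulr_gt0.
rewrite completed_square; field.
by rewrite sq_neq0 sv_neq0 gt_eqF ?expR_gt0.
Qed.

End GaussianIntegral.

Section QuadraticForms.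
Variable R : realType.

Lemma sc_add (X Y : 'M[R]_1) : sc (X + Y) = sc X + sc Y.
Proof. by rewrite /sc mxE. Qed.

Lemma sc_scale (x : R) (X : 'M[R]_1) : sc (x *: X) = x * sc X.
Proof. by rewrite /sc mxE. Qed.

Lemma sc_quad_form_expand n (A a : 'M[R]_(1, n)) (M : 'M[R]_n) x :
  sc ((A + x *: a) *m M *m (A + x *: a)^T) =
  sc (A *m M *m A^T) + x * (sc (A *m M *m a^T) + sc (a *m M *m A^T))
  + x ^+ 2 * sc (a *m M *m a^T).
Proof.
rewrite raddfD /= linearZ /= mulmxDl !mulmxDr !mulmxDl.
by rewrite -!scalemxAl -!scalemxAr !sc_add !sc_scale; ring.
Qed.

Lemma mulmx_tr_diag_last n (M : 'M[R]_(n + 1)) :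
  (M *m M^T) (rshift n ord0) (rshift n ord0) =
  sc (dlsubmx M *m (dlsubmx M)^T) + M (rshift n ord0) (rshift n ord0) ^+ 2.
Proof.
rewrite /sc !mxE big_split_ord big_ord1 /= !mxE expr2; congr (_ + _).
by apply: eq_bigr => i _; rewrite !mxE.
Qed.

End QuadraticForms.

Lemma trmx_invmx_mulmx_tr (R : comUnitRingType) n (B : 'M[R]_n) :
  B \in unitmx -> B^T *m invmx (B *m B^T) *m B = 1%:M.
Proof.
move=> uB; have uBBt : B *m B^T \in unitmx by rewrite unitmx_mul uB unitmx_tr uB.
have BX : B *m (B^T *m invmx (B *m B^T) *m B) = B.
  by rewrite !mulmxA mulmxV ?mul1mx.
by rewrite -[X in X = _](mulKmx uB) BX mulVmx.
Qed.

Section FilterRiccati.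
Variables (R : realType) (n : nat) (p : params R n).
Hypothesis sigY_pos : 0 < sigY p.
Hypothesis sig_pos : forall i, 0 < sig p i.
Hypothesis Lc_lower : forall i j : 'I_(n + 1), (i < j)%N -> Lc p i j = 0.
Hypothesis Lc_diag_pos : forall i : 'I_(n + 1), 0 < Lc p i i.
Hypothesis Lc_corr : forall i : 'I_(n + 1), (Lc p *m (Lc p)^T) i i = 1.

Lemma SigSt_unit : SigSt p \in unitmx.
Proof.
rewrite /SigSt unitmx_mul !unitmxE !unitfE det_diag det_trig; last first.
  by apply/is_trig_mxP => i j ij; rewrite !mxE; apply: Lc_lower.
by apply/andP; split; apply/lt0r_neq0/prodr_gt0 => i _; rewrite !mxE.
Qed.

Let A := SigYt p *m (SigSt p)^T.
Let M := invmx (SigSt p *m (SigSt p)^T).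

(* [P_rhs p P t] depends on [P] only through [P t]: it is convertible to
   [riccati (P t)]. *)
Definition riccati (x : R) : R := P_rhs p (fun=> x) 0.

Lemma riccati_quadratic x :
  riccati x = (sigY p ^+ 2 - sc (A *m M *m A^T))
    + x * (2 * lam p - (sc (A *m M *m av p) + sc ((av p)^T *m M *m A^T)))
    + x ^+ 2 * - sc ((av p)^T *m M *m av p).
Proof. by rewrite /riccati /P_rhs /Pbar sc_quad_form_expand trmxK; ring. Qed.

Lemma riccati_at0 :
  riccati 0 = (sigY p * Lc p (rshift n ord0) (rshift n ord0)) ^+ 2.
Proof.
rewrite riccati_quadratic mul0r expr0n /= mul0r !addr0.
have -> : A *m M *m A^T = sigY p ^+ 2 *: (LY p *m (LY p)^T).
  have := trmx_invmx_mulmx_tr SigSt_unit; rewrite /A /M /SigYt -scalemxAl.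
  move: (SigSt p) (invmx _) (LY p) => B N X BNB.
  rewrite linearZ /= trmx_mul trmxK -!scalemxAl -!scalemxAr scalerA -expr2.
  by rewrite !mulmxA -(mulmxA _ _ N) -(mulmxA _ _ B) BNB mulmx1.
have corr := Lc_corr (rshift n ord0); rewrite mulmx_tr_diag_last in corr.
rewrite sc_scale (_ : sc (LY p *m (LY p)^T) = 1 - Lc p (rshift n ord0) (rshift n ord0) ^+ 2).
  by rewrite exprMn; ring.
by rewrite -corr addrK.
Qed.

Lemma riccati_pos_near0 : exists2 eta, 0 < eta & forall x, `|x| < eta -> 0 < riccati x.
Proof.
have c0_gt0 : 0 < sigY p ^+ 2 - sc (A *m M *m A^T).
  have := riccati_at0; rewrite riccati_quadratic mul0r expr0n /= mul0r !addr0 => ->.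
  by rewrite exprn_gt0 // mulr_gt0.
have [eta eta_gt0 Heta] := quadratic_pos_near0
  (2 * lam p - (sc (A *m M *m av p) + sc ((av p)^T *m M *m A^T)))
  (- sc ((av p)^T *m M *m av p)) c0_gt0.
by exists eta => // x /Heta; rewrite riccati_quadratic.
Qed.

Lemma conditional_variance_pos (P : R -> R) :
  solves_on (TT p) P (P_rhs p P) -> 0 < P 0 -> forall t, 0 <= t <= TT p -> 0 < P t.
Proof.
move=> [cP dP]; have [eta eta_gt0 Heta] := riccati_pos_near0.
exact: (autonomous_ode_pos eta_gt0 Heta cP).
Qed.

End FilterRiccati.

Lemma gauss_exp_vhat (R : realType) n (p : params R n) (fh gh hh P : R -> R) t c g :
  0 < P t -> 0 < 1 - P t * fh t ->
  gauss_exp g (P t) (vhat p fh gh hh t c) =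
  c `^ (1 - delta p) / (1 - delta p) * expR ((1 - delta p) / 2 * Kt p fh P t)
  * expR (fbar fh P t / 2 * g ^+ 2 + gbar fh gh P t * g + hbar p fh gh hh P t).
Proof.
move=> Pt_gt0 qt_gt0; rewrite /vhat gauss_exp_expR_quadratic //.
by rewrite -[RHS]mulrA -expRD /fbar /gbar /hbar /dl; congr (_ * expR _); ring.
Qed.

Lemma powR_expR_eq1 (R : realType) (d K z : R) : d != 1 -> 0 < z ->
  z `^ (1 - d) * expR ((1 - d) / 2 * K) = 1 <-> z = expR (- (K / 2)).
Proof.
move=> d_neq1 z_gt0; have d1 : 1 - d != 0 by rewrite subr_eq0 eq_sym.
rewrite /powR gt_eqF // -expRD.
rewrite (_ : (1 - d) * ln z + _ = (1 - d) * (ln z + K / 2)); last by field.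
split => [/(congr1 (@ln R))|->]; last by rewrite expRK addNr mulr0 expR0.
rewrite expRK ln1 => /eqP; rewrite mulf_eq0 (negbTE d1) addr_eq0 => /eqP <-.
by rewrite lnK // posrE.
Qed.

Theorem mainTheorem14 (R : realType) (n : nat) (p : params R n)
  (fh gh hh P : R -> R) :
  (0 < n)%N ->
  0 < rr p -> 0 < sigY p -> (forall i, 0 < sig p i) ->
  (* Lc is the Cholesky factor of a correlation matrix R = Lc Lc^T *)
  (forall i j : 'I_(n + 1), (i < j)%N -> Lc p i j = 0) ->
  (forall i : 'I_(n + 1), 0 < Lc p i i) ->
  (forall i : 'I_(n + 1), (Lc p *m (Lc p)^T) i i = 1) ->
  (kk p <= n)%N -> 0 <= eps p -> 0 < TT p -> 0 < P0 p ->
  in_calP p (delta p) ->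
  (* full-information system, zero terminal values *)
  solves_on (TT p) fh (fhat_rhs p fh) -> fh (TT p) = 0 ->
  solves_on (TT p) gh (ghat_rhs p fh gh) -> gh (TT p) = 0 ->
  solves_on (TT p) hh (hhat_rhs p fh gh) -> hh (TT p) = 0 ->
  (* conditional variance P *)
  solves_on (TT p) P (P_rhs p P) -> P 0 = P0 p ->
  (forall t, 0 <= t <= TT p -> 0 < 1 - P t * fh t) ->
  (* loss of utility L_t *)
  (forall t c g, 0 <= t <= TT p -> 0 < c ->
     gauss_exp g (P t) (vhat p fh gh hh t c) - Vhat p fh gh hh P t c g =
     c `^ (1 - delta p) / (1 - delta p)
     * (expR ((1 - delta p) / 2 * Kt p fh P t) - 1)
     * expR (fbar fh P t / 2 * g ^+ 2 + gbar fh gh P t * g + hbar p fh gh hh P t))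
  /\
  (* efficiency zeta *)
  (forall z, 0 < z ->
     (gauss_exp (Gam0 p) (P 0) (vhat p fh gh hh 0 z) - Vhat p fh gh hh P 0 1 (Gam0 p) = 0
      <-> z = expR (- (Kt p fh P 0 / 2)))).
Proof.
move=> _ _ sigY_gt0 sig_pos Lc_lower Lc_diag Lc_corr _ _ T_gt0 P0_gt0
  [[_ d_neq1] _] _ _ _ _ _ _ Psol P0_eq q_gt0.
have P_gt0 := conditional_variance_pos sigY_gt0 sig_pos Lc_lower Lc_diag Lc_corr Psol
  (ltac:(by rewrite P0_eq)).
have expected_vhat t c g (tT : 0 <= t <= TT p) :=
  gauss_exp_vhat p gh hh c g (P_gt0 t tT) (q_gt0 t tT).
split => [t c g tT _ | z z_gt0]; first by rewrite expected_vhat // /Vhat /dl; ring.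
have d1 : 1 - delta p != 0 by rewrite subr_eq0 eq_sym.
rewrite expected_vhat ?lexx ?ltW // /Vhat powR1 /dl.
rewrite -(powR_expR_eq1 (Kt p fh P 0) d_neq1 z_gt0).
set X := expR (fbar _ _ _ / 2 * _ + _ + _).
have W_neq0 : X / (1 - delta p) != 0 by rewrite mulf_neq0 ?invr_eq0 // gt_eqF ?expR_gt0.
rewrite (_ : _ - _ = (z `^ (1 - delta p) * expR ((1 - delta p) / 2 * Kt p fh P 0) - 1)
                     * (X / (1 - delta p))); last by field.
split => [/eqP|->]; last by rewrite subrr mul0r.
by rewrite mulf_eq0 (negbTE W_neq0) orbF subr_eq0 => /eqP.
Qed.
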